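(* Consider the self-attention dynamics without LayerNorm, $X^{(t+1)}=A^{(t)}X^{(t)}W_V^{(t)}$, started from an arbitrary $X^{(0)}\in\mathbb{R}^{N\times d}$, and assume \textbf{A1}, \textbf{A2} and \textbf{A3}. If $\mathcal{G}$ is quasi-strongly connected with radius $r$, then there exists $\epsilon>0$ such that for all $t\ge 0$, $$A^{(t)}_{i,j}\ge \epsilon\quad\text{for all }(j,i)\in E(\mathcal{G}),$$ and there exists $C>0$ such that $$\mu(X^{(t)})\le C\,(1-\epsilon^r)^{t/r}\qquad\text{for all }t\ge 0,$$ i.e. all rows (tokens) of $X^{(t)}$ converge exponentially to a common vector.
   Context: Tokens are the rows of $X\in\mathbb{R}^{N\times d}$. An attention mask is a directed graph $\mathcal{G}$ on the node set $[N]=\{1,\dots,N\}$ with edge set $E(\mathcal{G})$; an edge $(j,i)\in E(\mathcal{G})$ means token $i$ attends to token $j$, and $\mathcal{N}_i=\{k:(k,i)\in E(\mathcal{G})\}$. For $R\in\mathbb{R}^{N\times N}$, the masked softmax is $\mathrm{softmax}_{\mathcal{G}}(R)_{ij}=\exp(R_{ij})/\sum_{k\in\mathcal{N}_i}\exp(R_{ik})$ if $(j,i)\in E(\mathcal{G})$ and $0$ otherwise. The attention matrices are $A^{(t)}=\mathrm{softmax}_{\mathcal{G}}\big(X^{(t)}W_Q^{(t)}(X^{(t)}W_K^{(t)})^\top/\sqrt{d_{QK}}\big)$ with a fixed constant $d_{QK}>0$, query/key matrices $W_Q^{(t)},W_K^{(t)}\in\mathbb{R}^{d\times d'}$ and value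 matrices $W_V^{(t)}\in\mathbb{R}^{d\times d}$; the mask $\mathcal{G}$ is the same for all $t$. Assumptions: \textbf{A1}: $(i,i)\in E(\mathcal{G})$ for every $i\in[N]$. \textbf{A2}: there is a constant $C'$ with $\max\{\|W_Q^{(t)}\|_2,\|W_K^{(t)}\|_2\}\le C'$ for all $t$. \textbf{A3}: the sequence $\big\{\|W_V^{(0)}W_V^{(1)}\cdots W_V^{(k)}\|_2\big\}_{k\ge0}$ is bounded. Similarity measure: $\mu(X)=\|X-\mathbf{1}\mathbf{1}^\top X/N\|_F$, where $\mathbf{1}\in\mathbb{R}^N$ is the all-ones vector. Graph notions: $v$ is reachable from $u$ if there is a directed path from $u$ to $v$; a center node is a node from which every node is reachable; $\mathcal{G}$ is quasi-strongly connected if it has at least one center node. The distance $\mathrm{dist}(u,v)$ is the length of a shortest directed path from $u$ to $v$; the radius of a quasi-strongly connected graph is $\min_{c\text{ center}}\max_{v}\mathrm{dist}(c,v)$. *)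

From HB Require Import structures.
From mathcomp Require Import all_boot all_order all_algebra.
From mathcomp Require Import all_classical all_reals all_analysis.
Set Implicit Arguments. Unset Strict Implicit. Unset Printing Implicit Defensive.
Import Order.TTheory GRing.Theory Num.Theory.
Local Open Scope ring_scope.

Section Defs.
Variable R : realType.

Definition frob (m n : nat) (M : 'M[R]_(m, n)) : R :=
  Num.sqrt (\sum_(i < m) \sum_(j < n) M i j ^+ 2).

Definition spec_norm (m n : nat) (M : 'M[R]_(m, n)) : R :=
  sup [set frob (M *m v) | v in [set v : 'cV[R]_n | frob v <= 1]]%classic.

Definition mu (N d : nat) (X : 'M[R]_(N, d)) : R :=
  frob (X - (N%:R)^-1 *: (const_mx 1 *m (const_mx 1 : 'M[R]_(1, N)) *m X)).

(* masked softmax; E j i means edge (j,i): token i attends to token j *)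
Definition masked_softmax (N : nat) (E : rel 'I_N) (M : 'M[R]_N) : 'M[R]_N :=
  \matrix_(i, j) if E j i
                 then expR (M i j) / \sum_(k | E k i) expR (M i k)
                 else 0.

Definition attention (N d d' : nat) (E : rel 'I_N) (dQK : R)
  (X : 'M[R]_(N, d)) (WQ WK : 'M[R]_(d, d')) : 'M[R]_N :=
  masked_softmax E ((Num.sqrt dQK)^-1 *: (X *m WQ *m (X *m WK)^T)).

Fixpoint mxprod (d : nat) (W : nat -> 'M[R]_d) (k : nat) : 'M[R]_d :=
  match k with
  | 0 => W 0%N
  | k'.+1 => mxprod W k' *m W k
  end.

End Defs.

Definition walk_of_len (N : nat) (E : rel 'I_N) (u v : 'I_N) (k : nat) : Prop :=
  exists p : seq 'I_N, size p = k /\ path E u p /\ last u p = v.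

Definition reachable (N : nat) (E : rel 'I_N) (u v : 'I_N) : Prop :=
  exists k, walk_of_len E u v k.

Definition center (N : nat) (E : rel 'I_N) (c : 'I_N) : Prop :=
  forall v, reachable E c v.

Definition quasi_strongly_connected (N : nat) (E : rel 'I_N) : Prop :=
  exists c, center E c.

Definition is_dist (N : nat) (E : rel 'I_N) (u v : 'I_N) (k : nat) : Prop :=
  walk_of_len E u v k /\ forall k', walk_of_len E u v k' -> (k <= k')%N.

Definition is_ecc (N : nat) (E : rel 'I_N) (c : 'I_N) (e : nat) : Prop :=
  (forall v, exists k, is_dist E c v k /\ (k <= e)%N) /\
  (exists v, is_dist E c v e).

Definition is_radius (N : nat) (E : rel 'I_N) (r : nat) : Prop :=
  (exists c, center E c /\ is_ecc E c r) /\
  (forall c e, center E c -> is_ecc E c e -> (r <= e)%N).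

From HB Require Import structures.
From mathcomp Require Import all_boot all_order all_algebra.
From mathcomp Require Import all_classical all_reals all_analysis.
From mathcomp Require Import lra zify.
Import Order.TTheory GRing.Theory Num.Theory.
Local Open Scope ring_scope.

Set Implicit Arguments.
Unset Strict Implicit.
Unset Printing Implicit Defensive.

(* The attention matrices are row-stochastic, so X^(t) = P_t X^(0) Q_t, where
   P_t = A^(t-1)...A^(0) is row-stochastic and Q_t = W_V^(0)...W_V^(t-1) is
   bounded by A3.  Bounded scores (A2, A3) give a uniform floor eps on the
   attention weights along the edges.  Every product of r consecutive
   attention matrices then puts weight at least eps^r on the column of a
   center c (follow shortest paths, waiting on self-loops), which shrinks the
   spread of every column of P_t by the factor 1 - eps^r.  Hence the rows of
   P_t, and with them the rows of X^(t), merge at rate (1 - eps^r)^(t/r). *)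

Section RowStochastic.
Variables (R : realType) (N : nat).
Implicit Types (A M P : 'M[R]_N) (x : 'I_N -> R).

Definition row_stochastic M :=
  (forall i j, 0 <= M i j) /\ (forall i, \sum_j M i j = 1).

Lemma row_stochastic1 : row_stochastic 1%:M.
Proof.
split=> [i j|i]; first by rewrite mxE; case: (i == j).
rewrite (bigD1 i) //= big1 ?addr0 ?mxE ?eqxx // => j /negPf ji.
by rewrite mxE eq_sym ji.
Qed.

Lemma row_stochasticM A B : row_stochastic A -> row_stochastic B ->
  row_stochastic (A *m B).
Proof.
move=> [A0 A1] [B0 B1]; split=> [i j|i].
  by rewrite mxE; apply: sumr_ge0 => k _; apply: mulr_ge0.
under eq_bigr do rewrite mxE.
rewrite exchange_big /=.
under eq_bigr do rewrite -mulr_sumr B1 mulr1.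
exact: A1.
Qed.

Lemma sumr_ge_term (f : 'I_N -> R) u : (forall k, 0 <= f k) -> f u <= \sum_k f k.
Proof. by move=> f0; rewrite (bigD1 u) //= lerDl; apply: sumr_ge0. Qed.

Lemma row_stochastic_avg_shift A x m i : row_stochastic A ->
  \sum_k A i k * x k = m + \sum_k A i k * (x k - m).
Proof.
move=> [_ A1]; rewrite -{1}(mul1r m) -(A1 i) mulr_suml -big_split /=.
by apply: eq_bigr => k _; rewrite mulrBr addrC subrK.
Qed.

Lemma row_stochastic_avg_contract A x m w c g i :
  row_stochastic A -> 0 <= g -> (forall i, g <= A i c) ->
  (forall k, m <= x k <= m + w) ->
  m + g * (x c - m) <= \sum_k A i k * x k <= m + g * (x c - m) + (1 - g) * w.
Proof.
move=> hA g0 hc hx; have [A0 A1] := hA.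
rewrite (row_stochastic_avg_shift _ m) // (bigD1 c) //=.
have hr k : 0 <= x k - m <= w.
  by case/andP: (hx k) => h1 h2; rewrite subr_ge0 h1 /= lerBlDl.
set s := \sum_(k | k != c) _.
have s0 : 0 <= s.
  by apply: sumr_ge0 => k _; apply: mulr_ge0 => //; case/andP: (hr k).
have s1 : s <= (1 - A i c) * w.
  apply: (@le_trans _ _ (\sum_(k | k != c) A i k * w)).
    by apply: ler_sum => k _; apply: ler_wpM2l => //; case/andP: (hr k).
  rewrite -mulr_suml; apply: ler_wpM2r.
    by case/andP: (hr c) => h1 h2; apply: le_trans h2.
  by move: (A1 i); rewrite (bigD1 c) //= => <-; lra.
move: (hc i) (hr c) s0 s1; set a := A i c; set y := x c - m.
move=> ga /andP [y0 yw] s0 s1.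
have : (a - g) * y <= (a - g) * w by apply: ler_wpM2l; lra.
by move=> ?; apply/andP; split; nra.
Qed.

Definition column_spread P w := forall l, exists m, forall i, m <= P i l <= m + w.

Lemma column_spread1 : column_spread 1%:M 1.
Proof.
by move=> l; exists 0 => i; rewrite mxE add0r; case: (i == l); rewrite ?lexx ?ler01.
Qed.

Lemma column_spread_contract M P w c g :
  row_stochastic M -> 0 <= g -> (forall i, g <= M i c) -> column_spread P w ->
  column_spread (M *m P) ((1 - g) * w).
Proof.
move=> hM g0 hc hP l; have [m hm] := hP l.
exists (m + g * (P c l - m)) => i; rewrite mxE.
exact: (row_stochastic_avg_contract (x := fun k => P k l) i hM g0 hc hm).
Qed.

Lemma column_spread_mull M P w :
  row_stochastic M -> column_spread P w -> column_spread (M *m P) w.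
Proof.
move=> hM hP l.
have := column_spread_contract (c := l) hM (lexx 0) (fun i => hM.1 i l) hP.
by rewrite subr0 mul1r; apply.
Qed.

Fixpoint lprod (A : nat -> 'M[R]_N) s k : 'M[R]_N :=
  if k is k'.+1 then A (s + k')%N *m lprod A s k' else 1%:M.

Lemma lprodD (A : nat -> 'M[R]_N) s t k :
  lprod A s (t + k) = lprod A (s + t) k *m lprod A s t.
Proof.
elim: k => [|k IH]; first by rewrite addn0 mul1mx.
by rewrite addnS /= IH mulmxA addnA.
Qed.

Lemma lprod_stochastic (A : nat -> 'M[R]_N) s k :
  (forall t, row_stochastic (A t)) -> row_stochastic (lprod A s k).
Proof.
move=> hA; elim: k => [|k IH] /=; first exact: row_stochastic1.
exact: row_stochasticM.
Qed.

Lemma lprod_ge_walk (E : rel 'I_N) (A : nat -> 'M[R]_N) eps c :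
  (forall t, row_stochastic (A t)) -> 0 <= eps -> (forall i, E i i) ->
  (forall t i j, E j i -> eps <= A t i j) ->
  forall s k v j, (j <= k)%N -> walk_of_len E c v j -> eps ^+ k <= lprod A s k v c.
Proof.
move=> hA e0 Er hE s; elim=> [|k IH] v j.
  rewrite leqn0 => /eqP -> [p [/size0nil -> [_ /= ->]]].
  by rewrite expr0 mxE eqxx.
move=> hjk hw; rewrite /= mxE.
have step u : eps <= A (s + k)%N v u -> eps ^+ k <= lprod A s k u c ->
    eps ^+ k.+1 <= \sum_u0 A (s + k)%N v u0 * lprod A s k u0 c.
  move=> h1 h2; apply: le_trans (sumr_ge_term u _); last first.
    by move=> u0; apply: mulr_ge0; [exact: (hA _).1 | exact: (lprod_stochastic _ _ hA).1].
  by rewrite exprS; apply: ler_pM => //; apply: exprn_ge0.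
case: (leqP j k) => [hj|hj].
  by apply: (step v); [exact: hE | exact: (IH v j)].
have ej : j = k.+1 by apply/eqP; rewrite eqn_leq hjk hj.
subst j.
case: hw; case/lastP => [|p x] [] //; rewrite size_rcons => -[sp].
rewrite rcons_path last_rcons => -[/andP [pp ex] xv].
by apply: (step (last c p)); [apply: hE; rewrite -xv | apply: (IH _ k) => //; exists p].
Qed.

Lemma column_spread_lprod (A : nat -> 'M[R]_N) r c g :
  (forall t, row_stochastic (A t)) -> 0 <= g -> (forall s i, g <= lprod A s r i c) ->
  forall q s, column_spread (lprod A 0 (q * r + s)) ((1 - g) ^+ q).
Proof.
move=> hA g0 hg; elim=> [|q IH] s.
  rewrite mul0n add0n expr0; elim: s => [|s IHs] /=; first exact: column_spread1.
  exact: column_spread_mull.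
have -> : (q.+1 * r + s = (q * r + s) + r)%N by rewrite mulSn; lia.
rewrite lprodD exprS; apply: column_spread_contract => //.
exact: lprod_stochastic.
Qed.

End RowStochastic.

Section EntryBounds.
Variable R : realType.

Lemma frob_le_const m n (M : 'M[R]_(m, n)) b :
  0 <= b -> (forall i j, `|M i j| <= b) -> frob M <= (m * n)%N%:R * b.
Proof.
move=> b0 hM; rewrite /frob.
have h1 : \sum_(i < m) \sum_(j < n) M i j ^+ 2 <= (m * n)%N%:R * b ^+ 2.
  apply: (@le_trans _ _ (\sum_(i < m) \sum_(j < n) b ^+ 2)).
    apply: ler_sum => i _; apply: ler_sum => j _.
    by rewrite -real_normK ?num_real //; apply: lerXn2r; rewrite ?nnegrE.
  by rewrite !sumr_const !card_ord -mulrnA mulr_natl mulnC.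
have h2 : (m * n)%N%:R * b ^+ 2 <= ((m * n)%N%:R * b) ^+ 2.
  rewrite exprMn; apply: ler_wpM2r; first exact: exprn_ge0.
  case: (m * n)%N => [|k]; first by rewrite expr0n.
  by rewrite expr2 ler_peMl // ?ler1n // ler0n.
apply: (le_trans (ler_wsqrtr (le_trans h1 h2))).
by rewrite sqrtr_sqr ger0_norm // mulr_ge0.
Qed.

Lemma entry_le_frob m n (M : 'M[R]_(m, n)) i j : `|M i j| <= frob M.
Proof.
rewrite /frob -sqrtr_sqr; apply: ler_wsqrtr.
rewrite (bigD1 i) //= (bigD1 j) //= -addrA lerDl.
apply: addr_ge0; first by apply: sumr_ge0 => k _; apply: sqr_ge0.
by apply: sumr_ge0 => k _; apply: sumr_ge0 => l _; apply: sqr_ge0.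
Qed.

(* The set defining spec_norm is bounded above and contains |M e_j|, the norm
   of the j-th column of M. *)
Lemma entry_le_spec_norm m n (M : 'M[R]_(m, n)) i j : `|M i j| <= spec_norm M.
Proof.
apply: (@le_trans _ _ (frob (M *m delta_mx j (0 : 'I_1)))).
  by have := entry_le_frob (M *m delta_mx j (0 : 'I_1)) i 0; rewrite -colE mxE.
set S := \sum_(k < m) \sum_(l < n) `|M k l|.
have S0 : 0 <= S by apply: sumr_ge0 => k _; apply: sumr_ge0.
apply: ub_le_sup; last first.
  exists (delta_mx j 0) => //=; rewrite /frob.
  rewrite (bigD1 j) //= big_ord1 mxE !eqxx /= expr1n big1 ?addr0 ?sqrtr1 //.
  by move=> k /negPf kj; rewrite big_ord1 mxE kj /= expr0n.
exists ((m * 1)%:R * S) => y [v /= hv <-].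
apply: frob_le_const => // k z.
rewrite mxE; apply: le_trans (ler_norm_sum _ _ _) _.
apply: (@le_trans _ _ (\sum_l `|M k l|)).
  apply: ler_sum => l _; rewrite normrM -{2}(mulr1 `|M k l|).
  by apply: ler_wpM2l => //; apply: le_trans (entry_le_frob _ _ _) hv.
by rewrite /S (bigD1 k) //= lerDl; apply: sumr_ge0 => k' _; apply: sumr_ge0.
Qed.

Lemma mulmx_entry_le m n p (A : 'M[R]_(m, n)) (B : 'M[R]_(n, p)) a b i j :
  (forall i k, `|A i k| <= a) -> (forall k j, `|B k j| <= b) ->
  `|(A *m B) i j| <= n%:R * (a * b).
Proof.
move=> hA hB; rewrite mxE; apply: le_trans (ler_norm_sum _ _ _) _.
apply: (@le_trans _ _ (\sum_(k < n) a * b)).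
  by apply: ler_sum => k _; rewrite normrM; apply: ler_pM.
by rewrite sumr_const card_ord mulr_natl.
Qed.

Lemma row_stochastic_mulmx_entry_le N d (P : 'M[R]_N) (Y : 'M[R]_(N, d)) b i j :
  row_stochastic P -> (forall k j, `|Y k j| <= b) -> `|(P *m Y) i j| <= b.
Proof.
move=> [P0 P1] hY; rewrite mxE; apply: le_trans (ler_norm_sum _ _ _) _.
apply: (@le_trans _ _ (\sum_k P i k * b)); last by rewrite -mulr_suml P1 mul1r.
by apply: ler_sum => k _; rewrite normrM ger0_norm //; apply: ler_wpM2l.
Qed.

(* Row i of P Y minus the mean row is the mean of the differences
   (P Y)_i - (P Y)_k, and each of their entries is at most N w b. *)
Lemma mu_le_column_spread N d (P : 'M[R]_N) (Y : 'M[R]_(N, d)) w b :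
  0 <= w -> 0 <= b -> column_spread P w -> (forall k j, `|Y k j| <= b) ->
  mu (P *m Y) <= (N * d)%N%:R * (N%:R * (w * b)).
Proof.
move=> w0 b0 hP hY; rewrite /mu; apply: frob_le_const => [|i j].
  by rewrite !mulr_ge0.
have N0 : (N%:R : R) != 0.
  by rewrite pnatr_eq0 -lt0n; apply: leq_ltn_trans (ltn_ord i).
set Z := P *m Y.
have hZ k : `|Z i j - Z k j| <= N%:R * (w * b).
  rewrite /Z !mxE -sumrB; apply: le_trans (ler_norm_sum _ _ _) _.
  apply: (@le_trans _ _ (\sum_(l < N) w * b)); last first.
    by rewrite sumr_const card_ord mulr_natl.
  apply: ler_sum => l _; rewrite -mulrBl normrM; apply: ler_pM => //.
  have [m hm] := hP l; move: (hm i) (hm k) => /andP [h1 h2] /andP [h3 h4].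
  by apply/ler_normlP; split; lra.
have -> : (Z - N%:R^-1 *: (const_mx 1 *m (const_mx 1 : 'M[R]_(1, N)) *m Z)) i j =
          N%:R^-1 * \sum_k (Z i j - Z k j).
  clearbody Z; rewrite !mxE sumrB sumr_const card_ord mulrBr.
  rewrite -[Z i j *+ N]mulr_natr mulrCA mulVf // mulr1.
  by congr (_ - _ * _); apply: eq_bigr => k _; rewrite !mxE big_ord1 !mxE !mul1r.
rewrite normrM ger0_norm ?invr_ge0 ?ler0n //.
apply: (@le_trans _ _ (N%:R^-1 * \sum_(k < N) N%:R * (w * b))).
  apply: ler_wpM2l; first by rewrite invr_ge0 ler0n.
  by apply: le_trans (ler_norm_sum _ _ _) _; apply: ler_sum.
by rewrite sumr_const card_ord -[(N%:R * (w * b)) *+ N]mulr_natl mulKf.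
Qed.

Lemma mu_lprod_decay N d (A : nat -> 'M[R]_N) (Y : nat -> 'M[R]_(N, d)) r c g b :
  (forall t, row_stochastic (A t)) -> 0 <= g <= 1 -> 0 <= b ->
  (forall s i, g <= lprod A s r i c) -> (forall t i j, `|Y t i j| <= b) ->
  forall t, mu (lprod A 0 t *m Y t) <= (N * d)%N%:R * (N%:R * b) * (1 - g) ^+ (t %/ r).
Proof.
move=> hA /andP [g0 g1] b0 hg hY t.
have := column_spread_lprod hA g0 hg (t %/ r) (t %% r); rewrite -divn_eq => hP.
have w0 : 0 <= (1 - g) ^+ (t %/ r) by rewrite exprn_ge0 // subr_ge0.
apply: le_trans (mu_le_column_spread w0 b0 hP (hY t)) _.
by rewrite mulrA [_ ^+ _ * b]mulrC !mulrA.
Qed.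

End EntryBounds.

Section Softmax.
Variables (R : realType) (N : nat) (E : rel 'I_N).
Hypothesis Erefl : forall i, E i i.

Lemma masked_softmax_den_gt0 (S : 'M[R]_N) i : 0 < \sum_(k | E k i) expR (S i k).
Proof.
rewrite (bigD1 i) //=; apply: ltr_pwDl; first exact: expR_gt0.
by apply: sumr_ge0 => k _; apply/ltW/expR_gt0.
Qed.

Lemma masked_softmax_stochastic (S : 'M[R]_N) : row_stochastic (masked_softmax E S).
Proof.
have den0 i := masked_softmax_den_gt0 S i.
split=> [i j|i].
  by rewrite mxE; case: ifP => // _; rewrite divr_ge0 ?ltW ?expR_gt0.
under eq_bigr do rewrite mxE.
by rewrite -big_mkcond /= -mulr_suml mulfV // gt_eqF.
Qed.

Lemma masked_softmax_ge (S : 'M[R]_N) K i j :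
  (forall i j, `|S i j| <= K) -> E j i ->
  expR (- K) / (N%:R * expR K) <= masked_softmax E S i j.
Proof.
move=> hS Eji; rewrite mxE Eji.
have den0 := masked_softmax_den_gt0 S i.
have den_le : \sum_(k | E k i) expR (S i k) <= N%:R * expR K.
  apply: (@le_trans _ _ (\sum_(k | E k i) expR K)).
    by apply: ler_sum => k _; rewrite ler_expR; case/ler_normlP: (hS i k).
  apply: (@le_trans _ _ (\sum_(k < N) expR K)).
    rewrite [X in _ <= X](bigID (fun k => E k i)) /= lerDl.
    by apply: sumr_ge0 => k _; apply/ltW/expR_gt0.
  by rewrite sumr_const card_ord mulr_natl.
apply: ler_pM.
- exact/ltW/expR_gt0.
- by rewrite invr_ge0 mulr_ge0 // ltW // expR_gt0.
- by rewrite ler_expR; case/ler_normlP: (hS i j) => h _; lra.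
- by rewrite lef_pV2 // posrE; apply: lt_le_trans den_le.
Qed.

End Softmax.

Section SelfAttention.
Variable R : realType.

(* The scores X W_Q (X W_K)^T / sqrt d_QK are bounded uniformly in t by a
   constant depending only on KX and C', hence so is the softmax floor. *)
Lemma attention_unif_ge N d d' (E : rel 'I_N) (dQK : R) (X : nat -> 'M[R]_(N, d))
    (WQ WK : nat -> 'M[R]_(d, d')) KX C' :
  (0 < N)%N -> (forall i, E i i) -> (forall t i k, `|X t i k| <= KX) ->
  (forall t k l, `|WQ t k l| <= C') -> (forall t k l, `|WK t k l| <= C') ->
  exists2 eps, 0 < eps <= 2^-1 &
    forall t i j, E j i -> eps <= attention E dQK (X t) (WQ t) (WK t) i j.
Proof.
move=> N0 Er hX hQ hK.
pose a := d%:R * (KX * C').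
pose K := (Num.sqrt dQK)^-1 * (d'%:R * (a * a)).
have hS t i j : `|((Num.sqrt dQK)^-1 *: (X t *m WQ t *m (X t *m WK t)^T)) i j| <= K.
  rewrite mxE normrM ger0_norm ?invr_ge0 ?sqrtr_ge0 //.
  apply: ler_wpM2l; first by rewrite invr_ge0 sqrtr_ge0.
  apply: mulmx_entry_le => [i' k|k j']; first exact: mulmx_entry_le.
  by rewrite mxE; apply: mulmx_entry_le.
exists (Num.min (expR (- K) / (N%:R * expR K)) 2^-1).
  rewrite ge_min lexx orbT andbT lt_min invr_gt0 ltr0n andbT.
  by rewrite divr_gt0 ?expR_gt0 // mulr_gt0 ?expR_gt0 // ltr0n.
by move=> t i j Eji; rewrite ge_min masked_softmax_ge.
Qed.

Fixpoint rprod d (W : nat -> 'M[R]_d) t : 'M[R]_d :=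
  if t is t'.+1 then rprod W t' *m W t' else 1%:M.

Lemma rprodS_mxprod d (W : nat -> 'M[R]_d) t : rprod W t.+1 = mxprod W t.
Proof.
elim: t => [|t IH]; first by rewrite /= mul1mx.
by rewrite -[rprod W t.+2]/(rprod W t.+1 *m W t.+1) IH.
Qed.

Lemma rprod_entry_le d (W : nat -> 'M[R]_d) B :
  (forall k, spec_norm (mxprod W k) <= B) ->
  forall t i j, `|rprod W t i j| <= Num.max 1 B.
Proof.
move=> hB [|t] i j; rewrite le_max; apply/orP; [left|right].
  by rewrite /= mxE; case: (i == j); rewrite ?normr1 ?normr0 ?ler01.
by rewrite rprodS_mxprod; apply: le_trans (hB t); apply: entry_le_spec_norm.
Qed.

Lemma trajectory_factor N d (A : nat -> 'M[R]_N) (W : nat -> 'M[R]_d)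
    (X : nat -> 'M[R]_(N, d)) :
  (forall t, X t.+1 = A t *m X t *m W t) ->
  forall t, X t = lprod A 0 t *m (X 0%N *m rprod W t).
Proof.
move=> hX; elim=> [|t IH]; first by rewrite mul1mx mulmx1.
by rewrite hX IH /= add0n !mulmxA.
Qed.

(* For r > 0 we have 1 - eps^r >= 1/2, so one extra factor costs at most 2;
   for r = 0 both exponents are 0 (t %/ 0 = 0 and t / 0 = 0). *)
Lemma pow_divn_le_powR (eps : R) r t : 0 < eps <= 2^-1 ->
  (1 - eps ^+ r) ^+ (t %/ r) <= 2 * powR (1 - eps ^+ r) (t%:R / r%:R).
Proof.
case/andP=> eps0 eps_half.
have [->|r0] := posnP r.
  by rewrite divn0 expr0 invr0 mulr0 powRr0 mulr1 ler1n.
set a := 1 - eps ^+ r; set q := (t %/ r)%N.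
have eps_r : eps ^+ r <= eps by apply: ler_iXnr => //; lra.
have a_half : 2^-1 <= a by rewrite /a; lra.
have a_le1 : a <= 1 by rewrite /a; have := exprn_ge0 r (ltW eps0); lra.
have aq0 : 0 <= a ^+ q by rewrite exprn_ge0 //; lra.
have a_pow : a ^+ q.+1 <= powR a (t%:R / r%:R).
  rewrite -powR_mulrn; last lra.
  apply: ger_powR; first by apply/andP; split; lra.
  rewrite ler_pdivrMr ?ltr0n // -natrM ler_nat.
  exact/ltnW/ltn_ceil.
apply: le_trans (ler_wpM2l _ a_pow); last lra.
by rewrite exprS mulrA -[X in X <= _]mul1r ler_wpM2r //; lra.
Qed.

End SelfAttention.

Theorem theorem1 (R : realType) (N d d' : nat) (E : rel 'I_N) (dQK : R)
  (WQ WK : nat -> 'M[R]_(d, d')) (WV : nat -> 'M[R]_d)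
  (X : nat -> 'M[R]_(N, d)) (r : nat) :
  0 < dQK ->
  (forall t, X t.+1 = attention E dQK (X t) (WQ t) (WK t) *m X t *m WV t) ->
  (* A1 *) (forall i, E i i) ->
  (* A2 *) (exists C' : R, forall t,
              Num.max (spec_norm (WQ t)) (spec_norm (WK t)) <= C') ->
  (* A3 *) (exists B : R, forall k, spec_norm (mxprod WV k) <= B) ->
  quasi_strongly_connected E ->
  is_radius E r ->
  exists eps : R, 0 < eps /\
    (forall t (i j : 'I_N), E j i ->
       eps <= attention E dQK (X t) (WQ t) (WK t) i j) /\
    (exists C : R, 0 < C /\
       forall t : nat, mu (X t) <= C * powR (1 - eps ^+ r) (t%:R / r%:R)).
Proof.
move=> _ hX Er [C' hC'] [B hB] _ [[c [_ [hecc _]]] _].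
pose A t := attention E dQK (X t) (WQ t) (WK t).
have hA t : row_stochastic (A t) by apply: masked_softmax_stochastic.
pose Y t := X 0%N *m rprod WV t.
have hXt t : X t = lprod A 0 t *m Y t := trajectory_factor hX t.
pose b := d%:R * (frob (X 0%N) * Num.max 1 B).
have b0 : 0 <= b by rewrite !mulr_ge0 ?sqrtr_ge0 // le_max ler01.
have hY t i j : `|Y t i j| <= b.
  by apply: mulmx_entry_le => [|k l]; [apply: entry_le_frob | apply: rprod_entry_le].
have hXb t i j : `|X t i j| <= b.
  by rewrite hXt; apply: row_stochastic_mulmx_entry_le (lprod_stochastic _ _ hA) (hY t).
have hWQ t k l : `|WQ t k l| <= C'.
  by move: (hC' t); rewrite ge_max => /andP [h _]; apply: le_trans (entry_le_spec_norm _ k l) h.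
have hWK t k l : `|WK t k l| <= C'.
  by move: (hC' t); rewrite ge_max => /andP [_ h]; apply: le_trans (entry_le_spec_norm _ k l) h.
have N0 : (0 < N)%N := leq_ltn_trans (leq0n c) (ltn_ord c).
have [eps eps_range hAeps] := attention_unif_ge dQK N0 Er hXb hWQ hWK.
have /andP [eps0 eps_half] := eps_range.
exists eps; split => //; split => //.
have hg s v : eps ^+ r <= lprod A s r v c.
  have [k [[hw _] hk]] := hecc v.
  exact: (lprod_ge_walk hA (ltW eps0) Er hAeps s hk hw).
have g_range : 0 <= eps ^+ r <= 1 by rewrite exprn_ge0 ?exprn_ile1 //; lra.
have := mu_lprod_decay hA g_range b0 hg hY; set K := _ * _ => hmu.
have K0 : 0 <= K by rewrite /K mulr_ge0 // mulr_ge0.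
exists (2 * (K + 1)); split; first lra.
move=> t; rewrite hXt; apply: le_trans (hmu t) _.
have := pow_divn_le_powR r t eps_range.
have := powR_ge0 (1 - eps ^+ r) (t%:R / r%:R).
have : 0 <= (1 - eps ^+ r) ^+ (t %/ r) by rewrite exprn_ge0 // subr_ge0; case/andP: g_range.
nra.
Qed.
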